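(* Let $\mathcal{M} = (N,V,S,\{S_{c}\}_{c \in Ag},L)$ be a simplicial belief model and let $a,b \in Ag$ be agents such that $S_{a} = S_{b}$. Then for every formula $\phi \in \mathcal{L}_{KB}(Ag)$ and every facet $X \in \mathcal{F}(S)$, we have $\mathcal{M}, X \models B_{a}(B_{b}\phi \rightarrow \phi)$.
   Context: $Ag$ is a finite set of agents and $\mathfrak{P}$ a countable set of propositional atoms. A simplicial complex is a set $S$ of sets closed under subsets; its elements are faces, and $\mathcal{F}(S)$ denotes the set of facets (faces maximal under inclusion). A simplicial frame is $(N,V,S)$ with $N$ a set of nodes, $V: N \to Ag$ a coloring function, and $S \subseteq 2^{N}$ a simplicial complex satisfying the uniquely colored facets (UCF) condition: every facet $X \in \mathcal{F}(S)$ contains exactly one node $n$ with $V(n)=c$ for each $c \in Ag$. For a facet $Z$ and agent $c$, $\pi_{c}(Z) = V^{-1}(c) \cap Z$ (the unique $c$-colored node of $Z$). A simplicial belief model is $(N,V,S,\{S_{c}\}_{c \in Ag},L)$ where $(N,V,S)$ is a UCF simplicial frame, $L: \mathfrak{P} \to 2^{\mathcal{F}(S)}$ is a valuation, and each $S_{c} \subseteq S$ is a nonempty simplicial complex which also satisfies UCF (so $\mathcal{F}(S_{c}) \subseteq \mathcal{F}(S)$). The language $\mathcal{L}_{KB}(Ag)$ is given by $\phi ::= P \mid \bot \mid \phi \rightarrow \psi \mid K_{c}\phi \mid B_{c}\phi$ ($P \in \mathfrak{P}$, $c \in Ag$), with other connectives defined as usual. Semantics at facets $X \in \mathcal{F}(S)$: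 $X \models P$ iff $X \in L(P)$; $X \not\models \bot$; $X \models \phi\rightarrow\psi$ iff $X \models \phi$ implies $X \models \psi$; $X \models K_{c}\phi$ iff for all $Y \in \mathcal{F}(S)$ with $\pi_{c}(Y) = \pi_{c}(X)$, $Y \models \phi$; $X \models B_{c}\phi$ iff for all $Y \in \mathcal{F}(S_{c})$ with $\pi_{c}(Y) = \pi_{c}(X)$, $Y \models \phi$. *)

From mathcomp Require Import all_boot.
Set Implicit Arguments. Unset Strict Implicit. Unset Printing Implicit Defensive.

Definition nset (N : Type) := N -> Prop.
Definition nsubset {N : Type} (X Y : nset N) : Prop := forall n, X n -> Y n.
Definition nseteq {N : Type} (X Y : nset N) : Prop := forall n, X n <-> Y n.

Definition simplicial_complex {N : Type} (S : nset N -> Prop) : Prop :=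
  forall X Y, S X -> nsubset Y X -> S Y.

Definition facet {N : Type} (S : nset N -> Prop) (X : nset N) : Prop :=
  S X /\ forall Y, S Y -> nsubset X Y -> nsubset Y X.

Definition UCF {Ag : finType} {N : Type} (V : N -> Ag) (S : nset N -> Prop) : Prop :=
  forall X, facet S X -> forall c : Ag, exists! n, X n /\ V n = c.

Definition pi {Ag : finType} {N : Type} (V : N -> Ag) (c : Ag) (Z : nset N) : nset N :=
  fun n => Z n /\ V n = c.

Unset Implicit Arguments.
Record simplicial_belief_model (Ag : finType) (Atom : countType) := SBM {
  sbm_N : Type;
  sbm_V : sbm_N -> Ag;
  sbm_S : nset sbm_N -> Prop;
  sbm_Sc : Ag -> nset sbm_N -> Prop;
  sbm_L : Atom -> nset sbm_N -> Prop;
  sbm_S_cplx : simplicial_complex sbm_S;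
  sbm_S_UCF : UCF sbm_V sbm_S;
  sbm_L_facets : forall P X, sbm_L P X -> facet sbm_S X;
  sbm_Sc_sub : forall c X, sbm_Sc c X -> sbm_S X;
  sbm_Sc_cplx : forall c, simplicial_complex (sbm_Sc c);
  sbm_Sc_nonempty : forall c, exists X, sbm_Sc c X;
  sbm_Sc_UCF : forall c, UCF sbm_V (sbm_Sc c);
  sbm_Sc_facets : forall c X, facet (sbm_Sc c) X -> facet sbm_S X
}.

Inductive formula (Ag : Type) (Atom : Type) : Type :=
| fAtom : Atom -> formula Ag Atom
| fBot : formula Ag Atom
| fImp : formula Ag Atom -> formula Ag Atom -> formula Ag Atom
| fK : Ag -> formula Ag Atom -> formula Ag Atom
| fB : Ag -> formula Ag Atom -> formula Ag Atom.

Arguments fAtom {Ag Atom}.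
Arguments fBot {Ag Atom}.
Arguments fImp {Ag Atom}.
Arguments fK {Ag Atom}.
Arguments fB {Ag Atom}.
Arguments sbm_N {Ag Atom}.
Arguments sbm_V {Ag Atom}.
Arguments sbm_S {Ag Atom}.
Arguments sbm_Sc {Ag Atom}.
Arguments sbm_L {Ag Atom}.
Set Implicit Arguments.

Fixpoint sat {Ag : finType} {Atom : countType} (M : simplicial_belief_model Ag Atom)
  (X : nset (sbm_N M)) (phi : formula Ag Atom) : Prop :=
  match phi with
  | fAtom P => sbm_L M P X
  | fBot => False
  | fImp p q => sat X p -> sat X q
  | fK c p => forall Y, facet (sbm_S M) Y ->
               nseteq (pi (sbm_V M) c Y) (pi (sbm_V M) c X) -> sat Y p
  | fB c p => forall Y, facet (sbm_Sc M c) Y ->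
               nseteq (pi (sbm_V M) c Y) (pi (sbm_V M) c X) -> sat Y p
  end.
Arguments sat {Ag Atom} M X phi.

From mathcomp Require Import all_boot.

(* Belief is reflexive on the facets of the agent's own complex S_c, and every
   facet that agent a considers possible is a facet of S_a = S_b. *)

Lemma nseteq_refl (N : Type) (X : nset N) : nseteq X X.
Proof. by move=> n; split. Qed.

Lemma sat_B_facet (Ag : finType) (Atom : countType)
  (M : simplicial_belief_model Ag Atom) (c : Ag) (phi : formula Ag Atom)
  (Y : nset (sbm_N M)) :
  facet (sbm_Sc M c) Y -> sat M Y (fB c phi) -> sat M Y phi.
Proof. by move=> HY; apply; last exact: nseteq_refl. Qed.

Theorem proposition1 (Ag : finType) (Atom : countType)
  (M : simplicial_belief_model Ag Atom) (a b : Ag) :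
  sbm_Sc M a = sbm_Sc M b ->
  forall (phi : formula Ag Atom) (X : nset (sbm_N M)),
    facet (sbm_S M) X ->
    sat M X (fB a (fImp (fB b phi) phi)).
Proof.
move=> Sab phi X _ Y HY _.
by apply: sat_B_facet; rewrite -Sab.
Qed.
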